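(* Let $q$ be a prime power and let $U(X), V(X) \in \mathbb{F}_q[X]$ with $\deg(V) < q$ and $i \geq 0$ an integer, such that $U(X) = V(X)\cdot \Lambda^i(X)$, where $\Lambda(X) = X^q - X$. Then for every integer $\ell$ with $0 \leq \ell < q$, $$U^{[\ell]}(X) \equiv (-1)^i \cdot V^{[\ell - i]}(X) \pmod{\Lambda(X)},$$ with the convention that $V^{[j]}(X) = 0$ for $j < 0$.
   Context: For a field $\mathbb{F}$ and $A(X) \in \mathbb{F}[X]$, the $\ell$-th Hasse derivative $A^{[\ell]}(X)$ is the coefficient of $Z^\ell$ in the expansion of $A(X+Z)$ as a polynomial in $Z$ with coefficients in $\mathbb{F}[X]$. *)

From HB Require Import structures.
From mathcomp Require Import all_boot all_order all_algebra all_field.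
Set Implicit Arguments. Unset Strict Implicit. Unset Printing Implicit Defensive.
Import GRing.Theory.
Local Open Scope ring_scope.

(* A(X+Z) as an element of {poly {poly F}}: the outer variable is Z,
   the inner variable (constants 'X%:P) is X. *)
Definition shiftXZ (F : fieldType) (A : {poly F}) : {poly {poly F}} :=
  (A ^:P) \Po ('X + ('X : {poly F})%:P).

Definition hasse (F : fieldType) (A : {poly F}) (l : nat) : {poly F} :=
  (shiftXZ A)`_l.

Definition hasseZ (F : fieldType) (A : {poly F}) (j : int) : {poly F} :=
  match j with Posz n => hasse A n | Negz _ => 0 end.

Definition Lambda (F : finFieldType) : {poly F} := 'X^#|F| - 'X.

(** Taylor shift [A |-> A(X + Z)] is a ring morphism, and by Frobenius it sends
    [Lambda(X) = X^q - X] to [Lambda(Z) + Lambda(X)], as [q] is a power of the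
    characteristic. Hence, coefficientwise modulo [Lambda(X)],
    [U(X + Z) = V(X + Z) (Z^q - Z)^i]. Below [Z^q] the factor [(Z^q - Z)^i] is
    the monomial [(-1)^i Z^i], so for [l < q] the coefficient of [Z^l] is
    [(-1)^i] times that of [Z^(l - i)] in [V(X + Z)]. *)

From HB Require Import structures.
From mathcomp Require Import all_boot all_order all_algebra all_field.
Import GRing.Theory.
Local Open Scope ring_scope.

Lemma pnat_card_pchar (R : finNzRingType) p : p \in [pchar R] -> p.-nat #|R|.
Proof.
move=> pcharRp; rewrite (card_pprimeChar pcharRp) pnatX pnat_id //.
exact: pcharf_prime pcharRp.
Qed.

Lemma finField_card_pchar_nat (F : finFieldType) : [pchar F].-nat #|F|.
Proof.
have [p _ pcharFp] := finPcharP F.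
by rewrite (eq_pnat _ (pcharf_eq pcharFp)) pnat_card_pchar.
Qed.

Section TaylorShift.
Variable F : fieldType.

Lemma shiftXZB (A B : {poly F}) : shiftXZ (A - B) = shiftXZ A - shiftXZ B.
Proof. by rewrite /shiftXZ !rmorphB. Qed.

Lemma shiftXZM (A B : {poly F}) : shiftXZ (A * B) = shiftXZ A * shiftXZ B.
Proof. by rewrite /shiftXZ !rmorphM. Qed.

Lemma shiftXZXn (A : {poly F}) n : shiftXZ (A ^+ n) = shiftXZ A ^+ n.
Proof. by rewrite /shiftXZ !rmorphXn. Qed.

Lemma shiftXZ_X : shiftXZ ('X : {poly F}) = 'X + 'X%:P.
Proof. by rewrite /shiftXZ map_polyX comp_polyX. Qed.

Lemma shiftXZ_Xn_pchar q :
  [pchar F].-nat q -> shiftXZ ('X^q : {poly F}) = 'X^q + ('X^q)%:P.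
Proof.
move=> pcharFq; have pcharFXZq : [pchar {poly {poly F}}].-nat q.
  by rewrite (eq_pnat _ (pchar_poly _)) (eq_pnat _ (pchar_poly _)).
by rewrite shiftXZXn shiftXZ_X exprDn_pchar // rmorphXn.
Qed.

Lemma modp_coefM_exprDC (d : {poly F}) (P Q : {poly {poly F}}) n l :
  (P * (Q + d%:P) ^+ n)`_l %% d = (P * Q ^+ n)`_l %% d.
Proof.
have [W ->] : exists W, (Q + d%:P) ^+ n = Q ^+ n + d%:P * W.
  exists (\sum_(k < n) (Q + d%:P) ^+ (n.-1 - k) * Q ^+ k).
  have := subrXX (Q + d%:P) Q n; rewrite addrAC subrr add0r => <-.
  by rewrite [RHS]addrC subrK.
by rewrite mulrDr mulrCA coefD coefCM modpD modp_mulr addr0.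
Qed.

End TaylorShift.

Lemma shiftXZ_Lambda (F : finFieldType) :
  shiftXZ (Lambda F) = ('X^#|F| - 'X) + (Lambda F)%:P.
Proof.
rewrite shiftXZB shiftXZ_Xn_pchar ?finField_card_pchar_nat // shiftXZ_X.
by rewrite /Lambda polyCB opprD addrACA.
Qed.

Section XnsubXPowers.
Variables (R : nzRingType) (q : nat).

Lemma coef_exp_XnsubX i j : (j < q)%N ->
  ((('X^q - 'X) ^+ i : {poly R})`_j) = (-1) ^+ i *+ (j == i).
Proof.
elim: i j => [|i IH] [|j] jq; rewrite ?expr0 ?coef1 //.
  by rewrite exprSr mulrBr coefB coefMXn coefMX jq eqxx subrr.
rewrite exprSr mulrBr coefB coefMXn coefMX jq /= sub0r (IH j (ltnW jq)).
by rewrite exprS mulN1r mulNrn eqSS.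
Qed.

Lemma coefM_exp_XnsubX (P : {poly R}) i l : (l < q)%N ->
  (P * ('X^q - 'X) ^+ i)`_l = if (i <= l)%N then P`_(l - i) * (-1) ^+ i else 0.
Proof.
move=> lq; rewrite coefMr.
under eq_bigr => j _.
  have jq : (j < q)%N by exact: leq_ltn_trans (ltn_ord j : (j <= l)%N) lq.
  rewrite coef_exp_XnsubX // mulrnAr mulrb.
  over.
by rewrite -big_mkcond (big_ord1_eq _ (fun j => P`_(l - j) * (-1) ^+ i)) ltnS.
Qed.

End XnsubXPowers.

Lemma hasseZ_subn (F : fieldType) (V : {poly F}) (l i : nat) :
  hasseZ V (l%:Z - i%:Z) = if (i <= l)%N then hasse V (l - i) else 0.
Proof.
case: leqP => [il | li]; first by rewrite subzn.
suff -> : l%:Z - i%:Z = Negz (i - l).-1 by [].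
by rewrite NegzE prednK ?subn_gt0 // -subzn ?(ltnW li) // opprB.
Qed.

Theorem lemma2p4 (F : finFieldType) (U V : {poly F}) (i : nat) :
  (size V <= #|F|)%N ->
  U = V * (Lambda F) ^+ i ->
  forall l : nat, (l < #|F|)%N ->
    hasse U l %% Lambda F
    = ((-1) ^+ i * hasseZ V (l%:Z - i%:Z)) %% Lambda F.
Proof.
move=> _ -> l lq.
rewrite /hasse shiftXZM shiftXZXn shiftXZ_Lambda modp_coefM_exprDC.
rewrite coefM_exp_XnsubX // hasseZ_subn.
by case: leqP => _; rewrite ?mulr0 // mulrC.
Qed.
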